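(* Let $R$ be an $F$-finite $F$-pure ring of prime characteristic $p$ and $J$ an ideal of $R$. Then $\mathcal P(J)=\bigcap_{s\in\mathbb N}J_s$ is uniformly $F$-compatible, and it contains every uniformly $F$-compatible ideal of $R$ contained in $J$; i.e., it is the largest uniformly $F$-compatible ideal contained in $J$.
   Context: $J_e=\{f\in R\mid \varphi(f^{1/p^e})\in J \text{ for all }\varphi\in\operatorname{Hom}_R(R^{1/p^e},R)\}$; the Cartier core of $J$ is $\mathcal P(J)=\bigcap_{s\in\mathbb N}J_s$. An ideal $J$ is uniformly $F$-compatible if $\varphi(J^{1/p^e})\subseteq J$ for every $e>0$ and every $\varphi\in\operatorname{Hom}_R(R^{1/p^e},R)$. *)

From HB Require Import structures.
From mathcomp Require Import all_boot all_order all_algebra.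
Set Implicit Arguments. Unset Strict Implicit. Unset Printing Implicit Defensive.
Import GRing.Theory.
Local Open Scope ring_scope.

Definition is_ideal (R : comNzRingType) (J : R -> Prop) : Prop :=
  [/\ J 0, (forall x y, J x -> J y -> J (x + y)) & (forall r x, J x -> J (r * x))].

(* Hom_R(R^{1/p^e}, R): identifying R^{1/p^e} with R (f^{1/p^e} <-> f), an
   R-linear map R^{1/p^e} -> R is an additive map phi : R -> R with
   phi (r^(p^e) * x) = r * phi x  (p^{-e}-linear map). *)
Definition pinv_linear (R : comNzRingType) (p e : nat) (phi : R -> R) : Prop :=
  (forall x y, phi (x + y) = phi x + phi y) /\
  (forall r x, phi (r ^+ (p ^ e) * x) = r * phi x).

Definition J_e (R : comNzRingType) (p : nat) (J : R -> Prop) (e : nat) : R -> Prop :=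
  fun f => forall phi : R -> R, pinv_linear p e phi -> J (phi f).

Definition cartier_core (R : comNzRingType) (p : nat) (J : R -> Prop) : R -> Prop :=
  fun f => forall s : nat, J_e p J s f.

Definition unif_F_compatible (R : comNzRingType) (p : nat) (J : R -> Prop) : Prop :=
  forall e : nat, (0 < e)%N -> forall phi : R -> R, pinv_linear p e phi ->
    forall x, J x -> J (phi x).

(* F-finite: F_* R is a finitely generated R-module, i.e. there are
   g_1..g_n with every x = sum r_i^p g_i. *)
Definition F_finite (R : comNzRingType) (p : nat) : Prop :=
  exists gs : seq R, forall x : R, exists rs : seq R,
    size rs = size gs /\ x = \sum_(i < size gs) rs`_i ^+ p * gs`_i.

(* F-pure: the Frobenius R -> F_* R is a pure map of R-modules, stated via the
   (standard, equivalent) linear-systems characterization of purity: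
   every finite R-linear system with constants in R that is solvable in F_* R
   (where a acts as a^p) is solvable in R. *)
Definition F_pure (R : comNzRingType) (p : nat) : Prop :=
  forall (m n : nat) (A : 'M[R]_(m, n)) (b : 'cV[R]_m),
    (exists y : 'cV[R]_n,
        map_mx (fun a => a ^+ p) A *m y = map_mx (fun a => a ^+ p) b) ->
    exists x : 'cV[R]_n, A *m x = b.

(* The maps phi in Hom_R(R^{1/p^e}, R) are closed under composition (the
   exponents add) and under precomposition with multiplication by a scalar,
   while for e = 0 they are just multiplications by phi 1.  Hence P(J) is an
   ideal that every phi maps into P(J), the case s = 0 gives P(J) ⊆ J, and a
   uniformly F-compatible ideal I ⊆ J is mapped into I ⊆ J by every phi. *)

From HB Require Import structures.
From mathcomp Require Import all_boot all_order all_algebra.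
Import GRing.Theory.
Local Open Scope ring_scope.
Set Implicit Arguments.

Section PinvLinear.

Variables (R : comNzRingType) (p : nat).

Lemma pinv_linear0 (e : nat) (phi : R -> R) : pinv_linear p e phi -> phi 0 = 0.
Proof.
case=> phiD _; apply: (addrI (phi 0)).
by rewrite -phiD !addr0.
Qed.

Lemma pinv_linear_comp (e s : nat) (phi psi : R -> R) :
  pinv_linear p e phi -> pinv_linear p s psi ->
  pinv_linear p (s + e) (psi \o phi).
Proof.
move=> [phiD phiZ] [psiD psiZ]; split=> [x y | r x] /=.
  by rewrite phiD psiD.
by rewrite expnD exprM phiZ psiZ.
Qed.

Lemma pinv_linear_mulr (e : nat) (phi : R -> R) (c : R) :
  pinv_linear p e phi -> pinv_linear p e (fun x => phi (c * x)).
Proof.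
move=> [phiD phiZ]; split=> [x y | r x].
  by rewrite mulrDr phiD.
by rewrite mulrCA phiZ.
Qed.

Lemma pinv_linear_id : pinv_linear p 0 (@id R).
Proof. by split=> // r x; rewrite expn0 expr1. Qed.

Lemma pinv_linear0_mulr (phi : R -> R) (x : R) :
  pinv_linear p 0 phi -> phi x = x * phi 1.
Proof. by case=> _ phiZ; rewrite -phiZ expn0 expr1 mulr1. Qed.

End PinvLinear.

Section CartierCore.

Variables (R : comNzRingType) (p : nat) (J : R -> Prop).
Hypothesis J_ideal : is_ideal J.

Lemma cartier_core_ideal : is_ideal (cartier_core p J).
Proof.
have [J0 JD _] := J_ideal.
split=> [s phi phi_lin | x y Px Py s phi phi_lin | r x Px s phi phi_lin].
- by rewrite (pinv_linear0 phi_lin).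
- case: (phi_lin) => phiD _; rewrite phiD.
  exact: JD (Px s phi phi_lin) (Py s phi phi_lin).
- exact: Px s _ (pinv_linear_mulr r phi_lin).
Qed.

Lemma cartier_core_unif_F_compatible : unif_F_compatible p (cartier_core p J).
Proof.
move=> e _ phi phi_lin x Px s psi psi_lin.
exact: Px (s + e)%N _ (pinv_linear_comp phi_lin psi_lin).
Qed.

Lemma cartier_core_sub x : cartier_core p J x -> J x.
Proof. by move=> Px; apply: Px 0%N id (@pinv_linear_id R p). Qed.

Lemma cartier_core_max (I : R -> Prop) :
  is_ideal I -> unif_F_compatible p I -> (forall x, I x -> J x) ->
  forall x, I x -> cartier_core p J x.
Proof.
move=> [_ _ IM] I_compat IJ x Ix [|s] phi phi_lin; apply: IJ.
  by rewrite (pinv_linear0_mulr x phi_lin) mulrC; apply: IM.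
exact: I_compat s.+1 isT phi phi_lin x Ix.
Qed.

End CartierCore.

Theorem mainTheorem8 (R : comNzRingType) (p : nat) (J : R -> Prop) :
  p \in [pchar R] -> F_finite R p -> F_pure R p -> is_ideal J ->
  [/\ is_ideal (cartier_core p J),
      unif_F_compatible p (cartier_core p J),
      (forall x, cartier_core p J x -> J x) &
      (forall I : R -> Prop, is_ideal I -> unif_F_compatible p I ->
         (forall x, I x -> J x) -> forall x, I x -> cartier_core p J x)].
Proof.
move=> _ _ _ J_ideal; split.
- exact: cartier_core_ideal.
- exact: cartier_core_unif_F_compatible.
- exact: cartier_core_sub.
- exact: cartier_core_max.
Qed.
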